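(* For every $n\in\mathbb{N}$ and every $u\in\mathbb{N}_0$ there exists a spidernet with data $(2n,\,n+1+u,\,n)$ if and only if $u\le 2n-1$.
   Context: A rooted graph is $(V,A,o)$ with $V$ countable, $o\in V$, $A:V\times V\to\{0,1\}$ symmetric with $A_{xx}=0$; $x\sim y$ iff $A_{xy}=1$. For a connected rooted graph let $d(x,y)$ be the graph distance and, for $\varepsilon\in\{-1,0,1\}$, $\omega_\varepsilon(x)=|\{y\in V: y\sim x,\ d(o,y)=d(o,x)+\varepsilon\}|$. For $a\in\mathbb{N}$, $b\in\mathbb{N}\setminus\{1\}$, $c\in\mathbb{N}$ with $c\le b-1$, a spidernet with data $(a,b,c)$ is a connected rooted graph with $\omega_{+1}(o)=a$, $\omega_{-1}(o)=\omega_0(o)=0$, and $\omega_{+1}(x)=c$, $\omega_{-1}(x)=1$, $\omega_0(x)=b-1-c$ for all $x\in V\setminus\{o\}$. *)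

From HB Require Import structures.
From mathcomp Require Import all_boot all_order all_algebra.
Set Implicit Arguments. Unset Strict Implicit. Unset Printing Implicit Defensive.
Import GRing.Theory Num.Theory.

Section Spidernet.
Variable V : countType.
Variable A : rel V.

Definition rooted_graph : Prop := (forall x y, A x y = A y x) /\ (forall x, A x x = false).

Definition walk_len (x y : V) (k : nat) : Prop :=
  exists s : seq V, [/\ path A x s, last x s = y & size s = k].

Definition connected : Prop := forall x y : V, exists k, walk_len x y k.

Definition gdist (x y : V) (k : nat) : Prop :=
  walk_len x y k /\ forall j, (j < k)%N -> ~ walk_len x y j.

Definition card_is (P : V -> Prop) (c : nat) : Prop :=
  exists s : seq V, [/\ uniq s, size s = c & forall y, y \in s <-> P y].

Definition omega_is (o : V) (eps : int) (x : V) (c : nat) : Prop :=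
  card_is (fun y => A y x /\ exists kx ky : nat,
             [/\ gdist o x kx, gdist o y ky & (ky%:Z = kx%:Z + eps)%R]) c.

Definition spidernet (o : V) (a b c : nat) : Prop :=
  [/\ (1 <= a)%N /\ (2 <= b)%N /\ (c <= b - 1)%N, rooted_graph, connected,
      [/\ omega_is o 1%R o a, omega_is o (-1)%R o 0 & omega_is o 0%R o 0]
    & forall x, x <> o ->
        [/\ omega_is o 1%R x c, omega_is o (-1)%R x 1 & omega_is o 0%R x (b - 1 - c)]].
End Spidernet.

From HB Require Import structures.
From mathcomp Require Import all_boot all_order all_algebra zify.
Import GRing.Theory.
Set Implicit Arguments. Unset Strict Implicit. Unset Printing Implicit Defensive.

(* Necessity: a neighbour x of the root, together with its b - 1 - c
   neighbours on its own level, are distinct neighbours of the root, so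
   b - c <= a.  Sufficiency: for a finite abelian group G, a natural number k
   and a symmetric set S of nonzero elements of G, hang a k-ary tree below each
   element of G (the level-one vertices) and join two vertices of the same
   level with the same tree address whose roots differ by an element of S.
   This is a spidernet with data (|G|, k + 1 + |S|, k), and Z/2n contains
   symmetric sets of nonzero elements of every size u <= 2n - 1. *)

Section Distance.
Variables (V : countType) (A : rel V).

Lemma gdist_uniq x y k1 k2 : gdist A x y k1 -> gdist A x y k2 -> k1 = k2.
Proof.
move=> [W1 M1] [W2 M2]; case: (ltngtP k1 k2) => // lt_k.
- by case: (M2 _ lt_k W1).
- by case: (M1 _ lt_k W2).
Qed.

Lemma gdist_refl x : gdist A x x 0.
Proof. by split; [exists [::] |]. Qed.

Lemma gdist1_adj x y : gdist A x y 1 -> A x y.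
Proof. by case=> [[[|z [|? ?]] [/= + <-]]] //; rewrite andbT. Qed.

Lemma walk_cat x y z k1 k2 :
  walk_len A x y k1 -> walk_len A y z k2 -> walk_len A x z (k1 + k2).
Proof.
move=> [s1 [p1 l1 <-]] [s2 [p2 l2 <-]]; exists (s1 ++ s2).
by rewrite cat_path p1 l1 p2 last_cat l1 l2 size_cat.
Qed.

End Distance.

Lemma spidernet_card_bound (V : countType) (A : rel V) (o : V) a b c :
  spidernet A o a b c -> (b - c <= a)%N.
Proof.
move=> [[a_gt0 [b_gt1 c_le]] [A_sym A_irr] _ [[s0 [s0_uniq s0_size s0E]] _ _] nonroot].
case: s0 s0_uniq s0_size s0E => [|x s0] s0_uniq s0_size s0E; first by rewrite -s0_size in a_gt0.
have [Axo [kx [ky [ox oy]]]] := (s0E x).1 (mem_head _ _).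
rewrite (gdist_uniq ox (gdist_refl A o)) add0r => -[ky1]; rewrite {}ky1 in oy.
have x_neq_o : x <> o by move=> x_o; rewrite x_o A_irr in Axo.
have [_ _ [s1 [s1_uniq s1_size s1E]]] := nonroot x x_neq_o.
have sub : {subset x :: s1 <= x :: s0}.
  move=> y; rewrite inE => /predU1P [-> | /s1E [_ [kx' [ky' [x_kx y_ky]]]]].
    exact: mem_head.
  rewrite (gdist_uniq x_kx oy) addr0 => -[ky'1]; rewrite {}ky'1 in y_ky.
  apply/(s0E y).2; split; first by rewrite A_sym gdist1_adj.
  by exists 0, 1; split => //; exact: gdist_refl.
have x_s1 : x \notin s1 by apply/negP => /s1E [Axx _]; rewrite A_irr in Axx.
have := uniq_leq_size _ sub; rewrite /= x_s1 s1_uniq s1_size -s0_size /= => /(_ isT).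
lia.
Qed.

Section SymmetricSetSpidernet.
Variables (G : finZmodType) (k : nat) (S : seq G).

(* [None] is the root; [Some (g, w)] is the vertex with address [w] in the
   tree hanging below the level-one vertex [g]. *)
Definition vertex : countType := option (G * seq 'I_k).

Definition level (x : vertex) : nat := if x is Some (_, w) then (size w).+1 else 0.

Definition parent (g : G) (w : seq 'I_k) : seq vertex :=
  if w is _ :: w' then [:: Some (g, w')] else [:: None].

Definition children (g : G) (w : seq 'I_k) : seq vertex :=
  [seq Some (g, j :: w) | j <- enum 'I_k].

Definition translates (g : G) (w : seq 'I_k) : seq vertex :=
  [seq Some ((g + s)%R, w) | s <- S].

Definition layer (g : G) (w : seq 'I_k) (eps : int) : seq vertex :=
  match eps with
  | Negz 0 => parent g w
  | Posz 0 => translates g w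
  | Posz 1 => children g w
  | _ => [::]
  end.

Definition nbrs (x : vertex) : seq vertex :=
  if x is Some (g, w) then parent g w ++ children g w ++ translates g w
  else [seq Some (g, [::]) | g <- enum G].

Definition adj : rel vertex := fun x y => y \in nbrs x.

Lemma level_layer g w eps y :
  y \in layer g w eps -> ((level y)%:Z = (size w).+1%:Z + eps)%R.
Proof.
case: eps => [[|[|?]]|[|?]] //=.
- by case/mapP => s _ ->; rewrite addr0.
- by case/mapP => j _ -> /=; lia.
- by case: w => [|? w]; rewrite inE => /eqP -> /=; lia.
Qed.

Lemma nbrs_layer g w y : adj (Some (g, w)) y -> exists e, y \in layer g w e.
Proof.
by rewrite /adj /= !mem_cat => /or3P[] ?; [exists (-1)%R | exists 1%R | exists 0%R].
Qed.

Lemma mem_nbrs_layer g w eps y :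
  adj (Some (g, w)) y /\ ((level y)%:Z = (size w).+1%:Z + eps)%R <-> y \in layer g w eps.
Proof.
split; last first.
  move=> y_eps; split; last exact: level_layer y_eps.
  rewrite /adj /= !mem_cat.
  by case: eps y_eps => [[|[|?]]|[|?]] //= y_eps; rewrite y_eps ?orbT.
case=> /nbrs_layer [e y_e] y_level.
by move: (level_layer y_e); rewrite y_level => /addrI ->.
Qed.

Lemma level_root_nbr y : y \in nbrs None -> level y = 1.
Proof. by case/mapP => g _ ->. Qed.

Lemma adj_level x y : adj x y -> (level y <= (level x).+1)%N.
Proof.
case: x => [[g w]|]; last by move/level_root_nbr ->.
case/nbrs_layer=> e y_e; move: (level_layer y_e) => /=.
by case: e y_e => [[|[|?]]|[|?]] // _; lia.
Qed.

Lemma walk_from_root x : walk_len adj None x (level x).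
Proof.
case: x => [[g w]|]; last by exists [::].
elim: w => [|j w [s [p l sz]]].
  exists [:: Some (g, [::])]; rewrite /= /adj andbT; split=> //.
  by apply/mapP; exists g; rewrite ?mem_enum.
exists (rcons s (Some (g, j :: w))); rewrite rcons_path p l last_rcons size_rcons sz.
by split=> //; rewrite /adj /= !mem_cat; apply/or3P/Or32/mapP; exists j; rewrite ?mem_enum.
Qed.

Lemma level_last_path x (s : seq vertex) :
  path adj x s -> (level (last x s) <= level x + size s)%N.
Proof.
elim: s x => [|y s IH] x; first by rewrite addn0.
case/andP=> /adj_level xy /IH /leq_trans-> //.
by rewrite addnS -addSn leq_add2r.
Qed.

Lemma gdist_rootE x d : gdist adj None x d <-> d = level x.
Proof.
split=> [[[s [p l <-]] min_d] | ->].
  have := level_last_path p; rewrite l add0n => le_d.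
  have [lt_d | ] := ltnP (level x) (size s); last lia.
  by case: (min_d _ lt_d (walk_from_root x)).
split=> [|j lt_j [s [p l sz]]]; first exact: walk_from_root.
by have := level_last_path p; rewrite l sz add0n; lia.
Qed.

Hypothesis S_sym : {in S, forall s, (- s)%R \in S}.

Lemma adj_sym x y : adj x y = adj y x.
Proof.
suff sym_imp u v : adj u v -> adj v u by apply/idP/idP; apply: sym_imp.
rewrite /adj; case: u => [[g w]|] /=; last by case/mapP => h _ -> /=; rewrite inE eqxx.
rewrite !mem_cat => /or3P [].
- case: w => [|j w]; rewrite inE => /eqP -> /=.
    by apply/mapP; exists g; rewrite ?mem_enum.
  by rewrite !mem_cat; apply/or3P/Or32/mapP; exists j; rewrite ?mem_enum.
- by case/mapP => j _ -> /=; rewrite inE eqxx.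
- case/mapP => s s_S -> /=; rewrite !mem_cat; apply/or3P/Or33/mapP.
  by exists (- s)%R; rewrite ?S_sym ?addrK.
Qed.

Lemma walk_to_root x : walk_len adj x None (level x).
Proof.
have [s [p l sz]] := walk_from_root x.
exists (rev (belast None s)); split.
- by rewrite -l rev_path; apply: sub_path p => u v; rewrite /= adj_sym.
- case/lastP: s {p sz} l => [/= <- // | s y _].
  by rewrite belast_rcons rev_cons last_rcons.
- by rewrite size_rev size_belast.
Qed.

Lemma omega_level eps x (t : seq vertex) : uniq t ->
    (forall y, adj x y /\ ((level y)%:Z = (level x)%:Z + eps)%R <-> y \in t) ->
  omega_is adj None eps x (size t).
Proof.
move=> t_uniq tE; exists t; split=> // y; rewrite -tE adj_sym.
split=> -[yx].
  by split=> //; exists (level x), (level y); split=> //; apply/gdist_rootE.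
by case=> kx [ky [/gdist_rootE -> /gdist_rootE -> E]].
Qed.

Lemma omega_root_up : omega_is adj None 1 None #|G|.
Proof.
rewrite cardE -(size_map (fun g => Some (g, [::]) : vertex)); apply: omega_level.
  by rewrite map_inj_uniq ?enum_uniq // => g h [].
by move=> y; split=> [[] // | y_nbr]; rewrite /adj y_nbr (level_root_nbr y_nbr).
Qed.

Lemma omega_root_other eps : eps != 1%R -> omega_is adj None eps None 0.
Proof.
move=> eps_neq1; apply: (omega_level (t := [::])) => // y.
split=> // -[/level_root_nbr -> /=]; rewrite add0r => eps1.
by rewrite -eps1 eqxx in eps_neq1.
Qed.

Hypothesis S_uniq : uniq S.

Lemma layer_uniq g w eps : uniq (layer g w eps).
Proof.
case: eps => [[|[|?]]|[|?]] //=; last by case: w.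
- by rewrite map_inj_uniq // => s t [/addrI].
- by rewrite map_inj_uniq ?enum_uniq // => i j [].
Qed.

Lemma omega_layer g w eps c :
  size (layer g w eps) = c -> omega_is adj None eps (Some (g, w)) c.
Proof.
move=> <-; apply: omega_level; first exact: layer_uniq.
by move=> y; apply: mem_nbrs_layer.
Qed.

Hypothesis S_nz : 0%R \notin S.

Lemma adj_irr x : adj x x = false.
Proof.
apply/negP; case: x => [[g w]|] /=; last by case/mapP.
move=> xx; have /mem_nbrs_layer : adj (Some (g, w)) (Some (g, w)) /\
    ((level (Some (g, w)))%:Z = (size w).+1%:Z + 0)%R by rewrite addr0.
case/mapP => s s_S [] g_gs; have s0 : s = 0%R by apply: (@addrI _ g); rewrite addr0 -g_gs.
by move: S_nz; rewrite -s0 s_S.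
Qed.

Theorem spidernet_of_symmetric_set :
  (0 < k + size S)%N -> spidernet adj None #|G| (k + 1 + size S) k.
Proof.
move=> kS_gt0; split.
- have : (0 < #|G|)%N by apply/card_gt0P; exists 0%R.
  by split=> //; split; lia.
- split; [exact: adj_sym | exact: adj_irr].
- move=> x y; exists (level x + level y).
  exact: walk_cat (walk_to_root x) (walk_from_root y).
- split; [exact: omega_root_up | exact: omega_root_other | exact: omega_root_other].
- have -> : (k + 1 + size S - 1 - k = size S)%N by lia.
  case=> [[g w]|] // _; split; apply: omega_layer.
  + by rewrite size_map size_enum_ord.
  + by case: w.
  + exact: size_map.
Qed.

End SymmetricSetSpidernet.

(* The interval of radius [u./2] centred at [h], with [h] itself removed when
   [u] is even, is stable under [i |-> 2h - i]. *)
Lemma symmetric_interval_exists (h u : nat) : (u < h.*2)%N ->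
  exists I : seq nat, [/\ uniq I, {in I, forall i, 0 < i < h.*2}%N,
    {in I, forall i, h.*2 - i \in I}%N & size I = u].
Proof.
move=> lt_u; set a := u./2; have uE := odd_double_half u.
set J := iota (h - a) a.*2.+1.
have memJ i : (i \in J) = (h - a <= i <= h + a)%N by rewrite mem_iota; lia.
have h_J : h \in J by rewrite memJ; lia.
case: (odd u) uE => /= uE.
  exists J; rewrite iota_uniq size_iota; split=> // i; rewrite !memJ; lia.
exists (rem h J); rewrite rem_uniq ?iota_uniq // size_rem // size_iota.
have memI i : (i \in rem h J) = (i != h) && (h - a <= i <= h + a)%N.
  by rewrite mem_rem_uniq ?iota_uniq // -memJ inE.
split=> // i; rewrite !memI; lia.
Qed.

Lemma symmetric_Zp_exists (p u : nat) : odd p -> (u <= p)%N ->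
  exists S : seq 'I_p.+1,
    [/\ uniq S, 0%R \notin S, {in S, forall s, (- s)%R \in S} & size S = u].
Proof.
move=> odd_p le_u; set h := p.+1./2.
have hE : h.*2 = p.+1 by have := odd_double_half p.+1; rewrite /= odd_p.
have [I [I_uniq I_range I_sym I_size]] : exists I : seq nat, [/\ uniq I,
    {in I, forall i, 0 < i < p.+1}%N, {in I, forall i, p.+1 - i \in I}%N & size I = u].
  by rewrite -hE; apply: symmetric_interval_exists; rewrite hE.
have inZpK i : i \in I -> val (inZp i : 'I_p.+1) = i.
  by move/I_range => /andP[_ lt_i]; rewrite /= modn_small.
exists [seq inZp i | i <- I]; rewrite size_map; split=> //.
- rewrite map_inj_in_uniq // => i j iI jI /(congr1 val).
  by rewrite !inZpK.
- apply/mapP => -[i iI /(congr1 val)]; rewrite inZpK //= => i0.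
  by have := I_range _ iI; rewrite -i0.
- move=> _ /mapP [i iI ->]; apply/mapP; exists (p.+1 - i)%N; first exact: I_sym.
  have /andP[i_gt0 lt_i] := I_range _ iI.
  apply: val_inj; rewrite (inZpK _ (I_sym _ iI)) /= [i %% _]modn_small // modn_small //.
  lia.
Qed.

Theorem mainTheorem8 (n u : nat) (hn : (1 <= n)%N) :
  (exists (V : countType) (A : rel V) (o : V),
      spidernet A o (2 * n) (n + 1 + u) n)
  <-> (u <= 2 * n - 1)%N.
Proof.
split=> [[V [A [o /spidernet_card_bound]]] | le_u]; first lia.
have Zp_size : (Zp_trunc (2 * n)).+2 = (2 * n)%N by apply: Zp_cast; lia.
have odd_p : odd (Zp_trunc (2 * n)).+1.
  by move: (congr1 odd Zp_size); rewrite /= oddM /=; case: odd.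
have le_u_p : (u <= (Zp_trunc (2 * n)).+1)%N by lia.
have [S [S_uniq S_nz S_sym S_size]] := symmetric_Zp_exists odd_p le_u_p.
exists (vertex 'Z_(2 * n) n), (adj (k := n) S), None.
have := spidernet_of_symmetric_set (k := n) S_sym S_uniq S_nz.
by rewrite S_size card_ord Zp_size; apply; lia.
Qed.
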